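(* Let $T$ be an $S$-regular matrix with vertex weights $b\in\mathbb{R}^k$ and edge weights $F\in M_k(\mathbb{C})$, whose underlying graph $G=(V,E)$ has equitable partition $V_1,\dots,V_k$ with quotient matrix $S=(s_{ij})$ and cell function $\tau$. Let $M=(S\circ F)+\operatorname{diag}(b)$, where $S\circ F$ is the entrywise product. Then: (1) $M$ is diagonalizable; (2) if $\lambda$ is an eigenvalue of $M$ with eigenvector $\psi\in\mathbb{R}^k$, then $\lambda$ is an eigenvalue of $T$ with eigenvector $\overline{\psi}\in\mathbb{R}^{|V|}$ defined by $\overline{\psi}(v)=\psi(\tau(v))$; (3) if $\phi$ is an eigenvector of $T$ whose eigenvalue is not an eigenvalue of $M$, then $\sum_{v\in V_i}\phi(v)=0$ for every $1\le i\le k$, and $\sum_{v\in V}\phi(v)=0$.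
   Context: All graphs are simple, undirected and connected. A graph $G=(V,E)$ is $S$-regular, for a $k\times k$ matrix $S=(s_{ij})$ with nonnegative integer entries, if $V$ has a partition into nonempty cells $V_1,\dots,V_k$ such that every $v\in V_i$ has exactly $s_{ij}$ neighbours in $V_j$. Write $n_i=|V_i|$; then $s_{ij}n_i=s_{ji}n_j$ for all $i,j$. The cell function $\tau:V\to\{1,\dots,k\}$ sends $v\in V_i$ to $i$. The underlying graph of a matrix $T$ indexed by a set $V$ is the graph on $V$ with an edge $uv$ ($u\neq v$) iff $T_{uv}\neq 0$. An $S$-regular matrix is a Hermitian matrix $T$ indexed by $V$ such that: its underlying graph $G$ (ignoring loops) is $S$-regular with partition $V_1,\dots,V_k$; there is $b\in\mathbb{R}^k$ (vertex weights) with $T_{uu}=b(i)$ for $u\in V_i$; and there is $F\in M_k(\mathbb{C})$ (edge weights) with $F_{ij}\neq 0$ for all $i,j$ such that $T_{uv}=F_{ij}$ whenever $u\in V_i$, $v\in V_j$ are adjacent in $G$ (and $T_{uv}=0$ for distinct nonadjacent $u,v$). *)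

From mathcomp Require Import all_boot all_order all_algebra.
Set Implicit Arguments. Unset Strict Implicit. Unset Printing Implicit Defensive.
Import Order.TTheory GRing.Theory Num.Theory.
Local Open Scope ring_scope.

Definition underlying_adj (C : numClosedFieldType) n (T : 'M[C]_n) : rel 'I_n :=
  fun u v => (u != v) && (T u v != 0).

Definition graph_connected n (adj : rel 'I_n) : Prop :=
  forall u v : 'I_n, connect adj u v.

Definition S_regular_graph n k (adj : rel 'I_n) (S : 'M[nat]_k) (tau : 'I_n -> 'I_k) : Prop :=
  (forall i : 'I_k, exists v : 'I_n, tau v = i) /\
  (forall (i j : 'I_k) (v : 'I_n), tau v = i ->
      #|[set u : 'I_n | adj v u && (tau u == j)]| = S i j).

Definition hermitian_mx (C : numClosedFieldType) n (T : 'M[C]_n) : Prop :=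
  forall u v, T u v = (T v u)^*.

Definition S_regular_matrix (C : numClosedFieldType) n k (T : 'M[C]_n)
    (S : 'M[nat]_k) (tau : 'I_n -> 'I_k) (b : 'I_k -> C) (F : 'M[C]_k) : Prop :=
  [/\ hermitian_mx T,
      graph_connected (underlying_adj T) &
      S_regular_graph (underlying_adj T) S tau] /\
  [/\ (forall i, b i \is Num.real),
      (forall i j, F i j != 0),
      (forall u, T u u = b (tau u)) &
      (forall u v, underlying_adj T u v -> T u v = F (tau u) (tau v))].

Definition quotient_mx (C : numClosedFieldType) k (S : 'M[nat]_k) (b : 'I_k -> C)
    (F : 'M[C]_k) : 'M[C]_k :=
  \matrix_(i, j) ((S i j)%:R * F i j) + diag_mx (\row_i b i).

Definition lift_vec (C : numClosedFieldType) n k (tau : 'I_n -> 'I_k) (psi : 'cV[C]_k)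
  : 'cV[C]_n := \col_v psi (tau v) 0.

From mathcomp Require Import all_boot all_order all_algebra.
From mathcomp Require Import ring.
Import Order.TTheory GRing.Theory Num.Theory.
Set Implicit Arguments. Unset Strict Implicit. Unset Printing Implicit Defensive.
Local Open Scope ring_scope.

(* Write n_i = |V_i|.  Counting the edges between V_i and V_j twice gives
   n_i s_ij = n_j s_ji, so diag(n) M is Hermitian and M is similar, through
   diag(sqrt n), to a Hermitian matrix: this is (1).  Since T is diag(b o tau)
   plus an F-weighted adjacency matrix, summing a row of T over a cell V_j
   gives an entry of M; hence T commutes with lifting, which is (2).
   Conjugating these row sums (T is Hermitian) and using the identity above,
   the cell-averaging map A : C^V -> C^k satisfies A T = M A, so A kills every
   eigenvector of T whose eigenvalue is not one of M: this is (3). *)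

Lemma diagonalizable_simmx (K : fieldType) m (P A B : 'M[K]_m) :
  P \in unitmx -> P *m A = B *m P -> diagonalizable B -> diagonalizable A.
Proof.
move=> Pu PA [Q Qu /diagonalizable_forPex [d /(simmxP Qu) QB]].
have QPu : Q *m P \in unitmx by rewrite unitmx_mul Qu Pu.
exists (Q *m P) => //; apply/diagonalizable_forPex; exists d; apply/simmxP => //.
by rewrite -mulmxA PA !mulmxA QB.
Qed.

Lemma normalmx_diagonalizable (C : numClosedFieldType) m (A : 'M[C]_m) :
  A \is normalmx -> diagonalizable A.
Proof.
move=> /orthomx_spectralP AE.
apply: (@diagonalizable_simmx _ _ (spectralmx A) _ (diag_mx (spectral_diag A))).
- exact: spectral_unit.
- by rewrite [X in _ *m X = _]AE !mulmxA mulmxV ?spectral_unit // mul1mx.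
- exact: diagonalizable_diag.
Qed.

Lemma diagonalizable_weighted_hermitian (C : numClosedFieldType) m
    (A : 'M[C]_m) (w : 'I_m -> C) :
  (forall i, 0 < w i) -> (forall i j, w i * A i j = w j * (A j i)^*) ->
  diagonalizable A.
Proof.
move=> w_gt0 wA.
pose d i := sqrtC (w i).
have d_neq0 i : d i != 0 by rewrite sqrtC_eq0 gt_eqF.
have d_ge0 i : 0 <= d i by rewrite sqrtC_ge0 ltW.
have d_conj i : (d i)^* = d i by apply/geC0_conj.
have dV_conj i : ((d i)^-1)^* = (d i)^-1 by apply/geC0_conj; rewrite invr_ge0.
have d_sqr i : w i = d i ^+ 2 by rewrite sqrtCK.
pose D := diag_mx (\row_i d i).
pose H := \matrix_(i, j) (d i * A i j / d j).
have H_herm : H \is hermsymmx.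
  apply/is_hermitianmxP; rewrite expr0 scale1r; apply/matrixP => i j.
  have Aji : (A j i)^* = d i ^+ 2 * A i j / d j ^+ 2.
    by rewrite -!d_sqr wA mulrC mulKf ?gt_eqF.
  rewrite !mxE !rmorphM /= d_conj dV_conj Aji.
  by field; rewrite !d_neq0.
apply: (@diagonalizable_simmx _ _ D _ H).
- by rewrite unitmxE unitfE det_diag; apply/prodf_neq0 => i _; rewrite mxE.
- by apply/matrixP => i j; rewrite mul_diag_mx mul_mx_diag !mxE mulfVK.
- exact/normalmx_diagonalizable/hermitian_normalmx.
Qed.

Lemma eigenvalue_col (K : fieldType) m (A : 'M[K]_m) a (v : 'cV_m) :
  v != 0 -> A *m v = a *: v -> eigenvalue A a.
Proof.
move=> v_neq0 Av.
have /det0P [w w_neq0 wA] : \det (a%:M - A) == 0.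
  rewrite -det_tr; apply/det0P; exists v^T; first by rewrite trmx_eq0.
  by rewrite -trmx_mul mulmxBl mul_scalar_mx Av subrr trmx0.
apply/eigenvalueP; exists w => //.
by move/eqP: wA; rewrite mulmxBr mul_mx_scalar subr_eq0 => /eqP.
Qed.

Lemma intertwined_eigenvector_eq0 (K : fieldType) m p (R : 'M[K]_(m, p))
    (A : 'M_p) (B : 'M_m) a (x : 'cV_p) :
  R *m A = B *m R -> A *m x = a *: x -> ~~ eigenvalue B a -> R *m x = 0.
Proof.
move=> RA Ax; apply: contraNeq => Rx_neq0.
have BRx : B *m (R *m x) = a *: (R *m x).
  by rewrite mulmxA -RA -mulmxA Ax scalemxAr.
exact: eigenvalue_col Rx_neq0 BRx.
Qed.

Section EquitablePartition.
Variables (n k : nat) (adj : rel 'I_n) (S : 'M[nat]_k) (tau : 'I_n -> 'I_k).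
Hypothesis adj_regular :
  forall u j, #|[set v | adj u v && (tau v == j)]| = S (tau u) j.

Lemma sum_adj_cells (V : nmodType) u (h : 'I_k -> V) :
  \sum_(v | adj u v) h (tau v) = \sum_j h j *+ S (tau u) j.
Proof.
rewrite (partition_big tau predT) //=; apply: eq_bigr => j _.
rewrite (eq_bigr (fun=> h j)) => [|v /andP[_ /eqP ->]] //.
by rewrite sumr_const -adj_regular; congr (_ *+ _); apply: eq_card => v; rewrite inE.
Qed.

Definition cell_size i := #|[set v | tau v == i]|.

Lemma cell_size_gt0 :
  (forall i, exists v, tau v = i) -> forall i, (0 < cell_size i)%N.
Proof.
move=> tau_onto i; have [v tau_v] := tau_onto i.
by apply/card_gt0P; exists v; rewrite inE tau_v.
Qed.

Hypothesis adj_sym : symmetric adj.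

Lemma cell_size_regularC i j : (cell_size i * S i j = cell_size j * S j i)%N.
Proof.
have edges_between i' j' : (cell_size i' * S i' j' =
    \sum_v \sum_u ((tau v == i') && adj v u && (tau u == j') : nat))%N.
  rewrite /cell_size mulnC -sum1_card big_distrr /= big_mkcond /=.
  apply: eq_bigr => v _; rewrite inE; case: eqP => [<-|_] /=; last by rewrite big1.
  rewrite muln1 -adj_regular -sum1_card big_mkcond /=.
  by apply: eq_bigr => u _; rewrite inE; case: (_ && _).
rewrite !edges_between exchange_big /=; apply: eq_bigr => v _; apply: eq_bigr => u _.
by rewrite adj_sym; case: (tau u == i); case: (tau v == j); rewrite ?andbT ?andbF.
Qed.

End EquitablePartition.

Section CellMean.
Variables (C : numClosedFieldType) (n k : nat) (tau : 'I_n -> 'I_k).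
Hypothesis tau_onto : forall i, exists v, tau v = i.

Local Notation cell_size := (cell_size tau).

Lemma lift_vec_eq0 (psi : 'cV[C]_k) : (lift_vec tau psi == 0) = (psi == 0).
Proof.
apply/eqP/eqP => [psi0|->]; last by apply/matrixP => v z; rewrite !mxE.
apply/matrixP => i z; rewrite (ord1 z) !mxE; have [v <-] := tau_onto i.
by have := congr1 (fun x : 'cV_n => x v 0) psi0; rewrite !mxE.
Qed.

Definition cell_mean : 'M[C]_(k, n) :=
  \matrix_(i, v) ((tau v == i)%:R / (cell_size i)%:R).

Lemma cell_meanE i v : cell_mean i v = (tau v == i)%:R / (cell_size i)%:R.
Proof. by rewrite mxE. Qed.

Lemma cell_size_neq0 i : (cell_size i)%:R != 0 :> C.
Proof. by rewrite pnatr_eq0 -lt0n cell_size_gt0. Qed.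

Lemma cell_sum_cell_mean (phi : 'cV[C]_n) i :
  \sum_(v | tau v == i) phi v 0 = (cell_size i)%:R * (cell_mean *m phi) i 0.
Proof.
rewrite mxE big_distrr big_mkcond /=; apply: eq_bigr => v _; rewrite cell_meanE.
by case: (tau v == i); rewrite ?mul0r ?mulr0 // mul1r mulrA divff ?mul1r ?cell_size_neq0.
Qed.

End CellMean.

Lemma hermitian_underlying_adj_sym (C : numClosedFieldType) n (T : 'M[C]_n) :
  hermitian_mx T -> symmetric (underlying_adj T).
Proof. by move=> T_herm u v; rewrite /underlying_adj eq_sym T_herm conjC_eq0. Qed.

Lemma quotient_mxE (C : numClosedFieldType) k (S : 'M[nat]_k) b (F : 'M[C]_k) i j :
  quotient_mx S b F i j = F i j *+ S i j + b i *+ (i == j).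
Proof. by rewrite !mxE mulr_natl. Qed.

Section SRegularMatrix.
Variables (C : numClosedFieldType) (n k : nat) (T : 'M[C]_n) (S : 'M[nat]_k)
  (tau : 'I_n -> 'I_k) (b : 'I_k -> C) (F : 'M[C]_k).
Hypothesis T_Sreg : S_regular_matrix T S tau b F.

Local Notation adj := (underlying_adj T).
Local Notation M := (quotient_mx S b F).
Local Notation cell_size := (cell_size tau).
Local Notation cell_mean := (@cell_mean C n k tau).

Let T_herm : hermitian_mx T. Proof. by case: T_Sreg => [[]]. Qed.
Let tau_onto : forall i, exists v, tau v = i. Proof. by case: T_Sreg => [[_ _ []]]. Qed.
Let adj_regular u j : #|[set v | adj u v && (tau v == j)]| = S (tau u) j.
Proof. by case: T_Sreg => [[_ _ [_ T_reg]]] _; apply: T_reg. Qed.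
Let b_real i : b i \is Num.real. Proof. by case: T_Sreg => _ [+ _ _ _]. Qed.
Let T_diag u : T u u = b (tau u). Proof. by case: T_Sreg => _ [_ _ + _]. Qed.
Let T_edge u v : adj u v -> T u v = F (tau u) (tau v).
Proof. by case: T_Sreg => _ [_ _ _]; apply. Qed.

Lemma S_regular_mxE u v :
  T u v = b (tau u) *+ (u == v) + F (tau u) (tau v) *+ adj u v.
Proof.
have [<-|neq_uv] := eqVneq u v; first by rewrite /underlying_adj eqxx addr0 T_diag.
case: (boolP (adj u v)) => [/T_edge -> | ]; first by rewrite add0r.
by rewrite /underlying_adj neq_uv negbK => /eqP ->; rewrite addr0.
Qed.

Lemma sum_row_cells u (h : 'I_k -> C) :
  \sum_v T u v * h (tau v) = \sum_j M (tau u) j * h j.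
Proof.
under eq_bigr do rewrite S_regular_mxE mulrDl.
under [RHS]eq_bigr do rewrite quotient_mxE mulrDl.
rewrite !big_split /= addrC; congr (_ + _).
- rewrite (bigID (adj u)) /= [X in _ + X]big1 ?addr0 => [|v /negbTE ->]; last first.
    by rewrite mulr0n mul0r.
  under eq_bigr => v adj_uv do rewrite adj_uv mulr1n.
  rewrite (sum_adj_cells adj_regular u (fun j => F (tau u) j * h j)).
  by apply: eq_bigr => j _; rewrite mulrnAl.
- rewrite (bigD1 u) // (bigD1 (tau u)) //= !eqxx !mulr1n !big1 ?addr0 // => [j|v].
    by rewrite eq_sym => /negbTE ->; rewrite mulr0n mul0r.
  by rewrite eq_sym => /negbTE ->; rewrite mulr0n mul0r.
Qed.

Lemma mul_lift_vec psi : T *m lift_vec tau psi = lift_vec tau (M *m psi).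
Proof.
apply/matrixP => u z; rewrite !mxE.
under eq_bigr do rewrite mxE.
by rewrite (sum_row_cells u (fun j => psi j 0)).
Qed.

Lemma edge_weight_conj i j : (0 < S i j)%N -> F i j = (F j i)^*.
Proof.
have [v <-] := tau_onto i; rewrite -adj_regular => /card_gt0P [u].
rewrite inE => /andP [adj_vu /eqP <-].
by rewrite -T_edge // T_herm T_edge // hermitian_underlying_adj_sym.
Qed.

Lemma quotient_mx_weighted_hermitian i j :
  (cell_size i)%:R * M i j = (cell_size j)%:R * (M j i)^*.
Proof.
rewrite !quotient_mxE rmorphD !rmorphMn /= (conj_Creal (b_real j)) !mulrDr eq_sym.
congr (_ + _); last by have [->|] := eqVneq i j; rewrite ?mulr0n ?mulr0.
rewrite -[F i j *+ _]mulr_natl -[_^* *+ _]mulr_natl !mulrA -!natrM.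
rewrite (cell_size_regularC adj_regular (hermitian_underlying_adj_sym T_herm)).
have [->|/edge_weight_conj ->] := posnP (S j i); first by rewrite muln0 !mul0r.
by rewrite conjCK.
Qed.

Lemma quotient_mx_diagonalizable : diagonalizable M.
Proof.
apply: (diagonalizable_weighted_hermitian (w := fun i => (cell_size i)%:R)).
  by move=> i; rewrite ltr0n cell_size_gt0.
exact: quotient_mx_weighted_hermitian.
Qed.

Lemma cell_mean_mul : cell_mean *m T = M *m cell_mean.
Proof.
apply/matrixP => i u; rewrite !mxE.
have cell_row : \sum_v T u v * (tau v == i)%:R = M (tau u) i.
  rewrite (sum_row_cells u (fun j => (j == i)%:R)) (bigD1 i) //= eqxx mulr1.
  by rewrite big1 ?addr0 // => j /negbTE ->; rewrite mulr0.
have -> : \sum_v cell_mean i v * T v u = (M (tau u) i)^* / (cell_size i)%:R.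
  rewrite -cell_row rmorph_sum big_distrl /=; apply: eq_bigr => v _.
  by rewrite cell_meanE T_herm rmorphM /= conjC_nat mulrC mulrA.
rewrite (bigD1 (tau u)) //= big1 ?addr0 => [|j neq_j]; last first.
  by rewrite cell_meanE eq_sym (negbTE neq_j) mul0r mulr0.
have conjM : (M (tau u) i)^* =
    (cell_size i)%:R * M i (tau u) / (cell_size (tau u))%:R.
  by rewrite quotient_mx_weighted_hermitian mulrC mulKf ?(cell_size_neq0 C tau_onto).
by rewrite cell_meanE eqxx mul1r conjM; field; rewrite !(cell_size_neq0 C tau_onto).
Qed.

End SRegularMatrix.

Theorem mainTheorem1 (C : numClosedFieldType) (n k : nat) (T : 'M[C]_n)
    (S : 'M[nat]_k) (tau : 'I_n -> 'I_k) (b : 'I_k -> C) (F : 'M[C]_k) :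
  S_regular_matrix T S tau b F ->
  let M := quotient_mx S b F in
  [/\ diagonalizable M,
      (forall (lambda : C) (psi : 'cV[C]_k), psi != 0 -> M *m psi = lambda *: psi ->
         lift_vec tau psi != 0 /\ T *m lift_vec tau psi = lambda *: lift_vec tau psi) &
      (forall (lambda : C) (phi : 'cV[C]_n), phi != 0 -> T *m phi = lambda *: phi ->
         ~~ eigenvalue M lambda ->
         (forall i : 'I_k, \sum_(v : 'I_n | tau v == i) phi v 0 = 0) /\
         \sum_(v : 'I_n) phi v 0 = 0)].
Proof.
move=> T_Sreg M; have [[_ _ [tau_onto _]] _] := T_Sreg.
split=> [|lambda psi psi_neq0 M_psi|lambda phi _ T_phi lambda_notin_M].
- exact: quotient_mx_diagonalizable T_Sreg.
- rewrite lift_vec_eq0 // (mul_lift_vec T_Sreg) M_psi; split=> //.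
  by apply/matrixP => v z; rewrite !mxE.
have mean_phi0 := intertwined_eigenvector_eq0 (cell_mean_mul T_Sreg) T_phi lambda_notin_M.
have cell_sums0 i : \sum_(v | tau v == i) phi v 0 = 0.
  by rewrite cell_sum_cell_mean // mean_phi0 mxE mulr0.
split=> //; rewrite (partition_big tau predT) //=.
by rewrite big1 // => i _; apply: cell_sums0.
Qed.
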